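(* Let $d\ge1$, $P\subseteq\mathbb R\times[d]$, $k\in[d]$ and $n$ a positive integer. If $n$ sets $\mathcal D=\{C_1,\dots,C_n\}\subseteq\mathcal C_{\equiv}(P)$ $k$-intersect, then there is a subfamily $\mathcal D'\subseteq\mathcal D$ with $|\mathcal D'|\le 2d-k$ such that $f(\bigcap\mathcal D)=f(\bigcap\mathcal D')$.
   Context: $[d]=\{1,\dots,d\}$. A (separated) $d$-interval is a set $I=\bigcup_{i\in[d]}\{(x,i): x\in I^{(i)}\}\subseteq\mathbb R\times[d]$ with each $I^{(i)}\subseteq\mathbb R$ convex (possibly empty); for any set $C\subseteq\mathbb R\times[d]$ write $C^{(i)}=\{x\in\mathbb R:(x,i)\in C\}$ for its $i$-th level, and points $(x,i)$ lie in the $i$-th level. For $P\subseteq\mathbb R\times[d]$, $\mathcal C_{\equiv}(P)=\{I\cap P: I \text{ a } d\text{-interval}\}$. A collection of sets of $\mathcal C_{\equiv}(P)$ $k$-intersects if its intersection contains at least $k$ points of $P$ lying in $k$ distinct levels. Let $\hat{\mathcal C}_{\equiv}(P)$ be the set of all intersections $\bigcap\mathcal C$ of finite $k$-intersecting subfamilies $\mathcal C\subseteq\mathcal C_{\equiv}(P)$, and define $f:\hat{\mathcal C}_{\equiv}(P)\to(\mathbb R\cup\{-\infty,+\infty\})^d$ by $f(\hat C)=(x_1,\dots,x_d)$ with $x_i=\sup\hat C^{(i)}$ if $\hat C^{(i)}\ne\emptyset$ and $x_i=-\infty$ if $\hat C^{(i)}=\emptyset$. *)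

From mathcomp Require Import all_boot all_order all_algebra.
From mathcomp Require Import boolp classical_sets reals constructive_ereal ereal.
Set Implicit Arguments. Unset Strict Implicit. Unset Printing Implicit Defensive.
Import Order.TTheory GRing.Theory Num.Theory.
Local Open Scope classical_set_scope.
Local Open Scope ring_scope.

(* Levels [d] = {1..d} are represented by 'I_d = {0..d-1}. *)

Section Defs.
Variables (R : realType) (d : nat).

Definition convexR (A : set R) : Prop :=
  forall x y z, A x -> A z -> x <= y -> y <= z -> A y.

Definition level (C : set (R * 'I_d)) (i : 'I_d) : set R := [set x | C (x, i)].

Definition d_interval (I : set (R * 'I_d)) : Prop :=
  forall i, convexR (level I i).

Definition Cequiv (P : set (R * 'I_d)) : set (set (R * 'I_d)) :=
  [set C | exists I, d_interval I /\ C = I `&` P].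

(* intersection of the subfamily {C_i : i in S}, taken inside P
   (so the empty subfamily has intersection P) *)
Definition famcap (P : set (R * 'I_d)) n (C : 'I_n -> set (R * 'I_d))
  (S : {set 'I_n}) : set (R * 'I_d) :=
  [set p | P p /\ forall i, i \in S -> C i p].

Definition k_points (P : set (R * 'I_d)) (k : nat) (A : set (R * 'I_d)) : Prop :=
  exists (g : 'I_k -> 'I_d) (xs : 'I_k -> R),
    injective g /\ forall j, P (xs j, g j) /\ A (xs j, g j).

Definition k_intersects (P : set (R * 'I_d)) (k : nat) n
  (C : 'I_n -> set (R * 'I_d)) (S : {set 'I_n}) : Prop :=
  k_points P k (famcap P C S).

Definition f_sup (Ch : set (R * 'I_d)) : 'I_d -> \bar R :=
  fun i => if pselect (level Ch i !=set0)
           then ereal_sup [set x%:E | x in level Ch i]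
           else -oo%E.

End Defs.

From mathcomp Require Import all_boot all_order all_algebra.
From mathcomp Require Import boolp classical_sets reals constructive_ereal ereal.
From mathcomp Require Import zify.
Set Implicit Arguments. Unset Strict Implicit. Unset Printing Implicit Defensive.
Import Order.TTheory GRing.Theory Num.Theory.
Local Open Scope classical_set_scope.
Local Open Scope ring_scope.

(* On each level i the question is one-dimensional: the i-th levels of the
   C_j are convex relative to the i-th level of P.  If the whole family meets
   level i, a single C_a already has the same supremum there (take the set
   whose escaping point above the intersection is lowest: that point lies in
   every C_b).  If it misses level i, Helly's theorem on the line gives two
   sets missing it.  At least k levels are met, so at most
   (d - k) * 2 + k = 2d - k sets are needed. *)

Section ConvexFamily.
Local Open Scope order_scope.
Variables (disp : Order.disp_t) (T : orderType disp).

Definition convex_in (Q A : set T) : Prop :=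
  forall x y z, A x -> A z -> Q y -> x <= y -> y <= z -> A y.

(* [level (famcap P C S) i] is convertible to
   [subcap (level P i) (fun j => level (C j) i) S]. *)
Definition subcap (Q : set T) n (A : 'I_n -> set T) (S : {set 'I_n}) : set T :=
  [set x | Q x /\ forall j, j \in S -> A j x].

Variables (Q : set T) (n : nat) (A : 'I_n -> set T).
Hypotheses (convexA : forall j, convex_in Q (A j)) (n_gt0 : (0 < n)%N).
Let i0 := Ordinal n_gt0.

Lemma helly_interval :
  (forall a b, subcap Q A [set a; b] !=set0) -> subcap Q A [set: 'I_n] !=set0.
Proof.
move=> meet2.
have /choice[z zP] a :
    exists f : 'I_n -> T, forall b, subcap Q A [set a; b] (f b).
  by have [f fP] := choice (meet2 a); exists f.
pose bm a := [arg min_(b < i0) z a b]; pose am := [arg max_(a > i0) z a (bm a)].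
have bmP a b : z a (bm a) <= z a b.
  by rewrite /bm; case: arg_minP => // c _; apply.
have amP a : z a (bm a) <= z am (bm am).
  by rewrite /am; case: arg_maxP => // c _; apply.
exists (z am (bm am)); split => [|j _]; first exact: (zP am (bm am)).1.
apply: (convexA (x := z j (bm j)) (z := z am j)) => //.
- by apply: (zP j (bm j)).2; rewrite set21.
- by apply: (zP am j).2; rewrite set22.
- exact: (zP am (bm am)).1.
Qed.

Lemma subcap_cofinal_single : subcap Q A [set: 'I_n] !=set0 ->
  exists a, forall x, subcap Q A [set a] x ->
    exists2 y, subcap Q A [set: 'I_n] y & x <= y.
Proof.
move=> [y0 y0P]; apply: contrapT => no_a.
have /choice[w wP] a : exists wa,
    subcap Q A [set a] wa /\ forall y, subcap Q A [set: 'I_n] y -> y < wa.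
  apply: contrapT => no_wa; apply: no_a; exists a => x xP.
  apply: contrapT => nodom; apply: no_wa; exists x; split => // y yP.
  by rewrite ltNge; apply/negP => xy; apply: nodom; exists y.
pose a := [arg min_(b < i0) w b].
have aP b : w a <= w b by rewrite /a; case: arg_minP => // c _; apply.
suff waP : subcap Q A [set: 'I_n] (w a) by have := (wP a).2 _ waP; rewrite ltxx.
split => [|b _]; first exact: (wP a).1.1.
apply: (convexA (x := y0) (z := w b)) => //.
- by apply: y0P.2; rewrite inE.
- by apply: (wP b).1.2; rewrite set11.
- exact: (wP a).1.1.
- exact/ltW/((wP a).2).
Qed.

End ConvexFamily.

Lemma card_bigcup_le (I J : finType) (F : J -> {set I}) :
  (#|(\bigcup_j F j)%SET| <= \sum_j #|F j|)%N.
Proof.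
elim/big_rec2: _ => [|j m U _ leUm]; first by rewrite cards0.
by rewrite (leq_trans (leq_card_setU _ _).1) ?leq_add2l.
Qed.

Lemma card_bigcup_le_two_minus (I J : finType) (F : J -> {set I}) (B : {set J}) :
  (forall j, #|F j| <= 2 - (j \in B))%N ->
  (#|(\bigcup_j F j)%SET| <= 2 * #|J| - #|B|)%N.
Proof.
move=> leF; apply: (leq_trans (card_bigcup_le F)).
apply: (@leq_trans (\sum_j (2 - (j \in B)))); first exact: leq_sum.
have sum_two : (\sum_j (2 - (j \in B)) + \sum_j (j \in B : nat) = 2 * #|J|)%N.
  rewrite -big_split /= (eq_bigr (fun _ => 2%N)) => [|j _].
    by rewrite sum_nat_const mulnC.
  by case: (j \in B).
have sum_B : (\sum_j (j \in B : nat) = #|B|)%N.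
  by rewrite -sum1_card [RHS]big_mkcond; apply: eq_bigr => j _; case: (j \in B).
lia.
Qed.

Section Levels.
Variables (R : realType) (d : nat) (P : set (R * 'I_d)).

Lemma Cequiv_convex_in C i : Cequiv P C -> convex_in (level P i) (level C i).
Proof.
move=> [I [convI ->]] x y z [Ix _] [Iz _] Py xy yz.
by split=> //; exact: convI Ix Iz xy yz.
Qed.

Lemma famcapS n (C : 'I_n -> set (R * 'I_d)) (S S' : {set 'I_n}) :
  S \subset S' -> famcap P C S' `<=` famcap P C S.
Proof.
by move=> /fintype.subsetP sSS' p [Pp Cp]; split=> // j /sSS'; exact: Cp.
Qed.

Lemma f_sup_cofinal (A B : set (R * 'I_d)) i :
  level A i `<=` level B i ->
  (forall x, level B i x -> exists2 y, level A i y & x <= y) ->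
  f_sup A i = f_sup B i.
Proof.
move=> AB BA; rewrite /f_sup.
case: pselect => [[x Ax]|nA]; case: pselect => [[y By]|nB] //.
- apply/eqP; rewrite eq_le; apply/andP; split.
    by apply: ereal_sup_le => _ [z Az <-]; exists z => //; exact: AB.
  apply: ge_ereal_sup => _ [z Bz <-]; have [w Aw zw] := BA z Bz.
  by apply: le_ereal_sup_tmp; exists w%:E; [exists w | rewrite lee_fin].
- by exfalso; apply: nB; exists x; exact: AB.
- by exfalso; apply: nA; have [w Aw _] := BA y By; exists w.
Qed.

Lemma k_points_card_levels k (A : set (R * 'I_d)) :
  k_points P k A -> (k <= #|[set i | `[< level A i !=set0 >]]%SET|)%N.
Proof.
move=> [g [xs [g_inj gP]]].
rewrite -[k in (k <= _)%N]card_ord -(card_imset _ g_inj).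
apply/subset_leq_card/fintype.subsetP => _ /imsetP[j _ ->].
by rewrite inE; apply/asboolP; exists (xs j); exact: (gP j).2.
Qed.

Lemma level_cofinal_subfamily n (C : 'I_n -> set (R * 'I_d)) i :
  (0 < n)%N -> (forall j, Cequiv P (C j)) ->
  exists T : {set 'I_n},
    (#|T| <= 2 - `[< level (famcap P C [set: 'I_n]) i !=set0 >])%N /\
    forall x, level (famcap P C T) i x ->
      exists2 y, level (famcap P C [set: 'I_n]) i y & x <= y.
Proof.
move=> n_gt0 CP; have convC j := Cequiv_convex_in (i := i) (CP j).
have [meet|miss] := pselect (level (famcap P C [set: 'I_n]) i !=set0).
  rewrite asboolT //; have [a aP] := subcap_cofinal_single convC n_gt0 meet.
  by exists [set a]%SET; rewrite cards1.
rewrite asboolF //.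
have [a [b nab]] : exists a b, ~ (level (famcap P C [set a; b]) i !=set0).
  apply: contrapT => meet2; apply/miss/(helly_interval convC n_gt0) => a b.
  by apply: contrapT => nab; apply: meet2; exists a, b.
exists [set a; b]%SET; split=> [|x abx]; first by rewrite cards2; case: (a != b).
by exfalso; apply: nab; exists x.
Qed.

End Levels.

Theorem lemma5 (R : realType) (d : nat) (P : set (R * 'I_d)) (k n : nat)
  (C : 'I_n -> set (R * 'I_d)) :
  (1 <= d)%N -> (1 <= k)%N -> (k <= d)%N -> (0 < n)%N ->
  (forall i, Cequiv P (C i)) ->
  k_intersects P k C [set: 'I_n] ->
  exists S : {set 'I_n},
    (#|S| <= 2 * d - k)%N /\
    f_sup (famcap P C [set: 'I_n]) = f_sup (famcap P C S).
Proof.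
move=> _ _ _ n_gt0 CP /k_points_card_levels kB.
have /choice[T TP] i := level_cofinal_subfamily i n_gt0 CP.
exists (\bigcup_i T i)%SET; split.
  rewrite -[d in (2 * d)%N]card_ord.
  apply: leq_trans (leq_sub2l _ kB).
  by apply: card_bigcup_le_two_minus => i; rewrite inE; exact: (TP i).1.
apply/funext => i; apply: f_sup_cofinal => x; first exact/famcapS/finset.subsetT.
by move=> /(famcapS (finset.bigcup_sup i isT)); exact: (TP i).2.
Qed.
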